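(* In the setting described in the context, fix $n\ge 1$, $\tau>0$ and a point ${\bf y}\in\Omega$, and assume that the $nm\times nm$ data-driven mass matrix ${\bf M}$ is symmetric positive definite with block Cholesky factorization ${\bf M}={\bf R}^T{\bf R}$, ${\bf R}$ block upper triangular. Then for every $j=0,\ldots,n-1$ the estimated internal wave evaluated at the sensor locations and at time $t_j=j\tau$ satisfies \[ \big(g(t_j,{\bf x}_1;{\bf y}),\ldots,g(t_j,{\bf x}_m;{\bf y})\big)={\bf V}_o({\bf y})\,{\bf R}\,{\bf e}_j , \] where ${\bf e}_j\in\mathbb{R}^{nm\times m}$ is the $(j+1)$-th column block (of width $m$) of the $nm\times nm$ identity matrix.
   Context: Let $\Omega\subset\mathbb{R}^d$ be a bounded domain whose boundary is split into an ''accessible'' part $\partial\Omega_{\rm ac}$ (homogeneous Neumann condition) and an ''inaccessible'' part $\partial\Omega_{\rm inac}=\partial\Omega\setminus\partial\Omega_{\rm ac}$ (homogeneous Dirichlet condition). For a positive wave speed $c({\bf x})$ let $A(c)=-c({\bf x})\Delta\big[c({\bf x})\,\cdot\,\big]$ with these boundary conditions; it is self-adjoint and positive on $L^2(\Omega)$, with eigenvalues $0<\theta_1\le\theta_2\le\cdots\to\infty$ and $L^2(\Omega)$-orthonormal eigenfunctions $y_l$. Functions of $A(c)$ are defined spectrally: $h(A(c))\phi=\sum_l h(\theta_l)\,y_l\,\langle y_l,\phi\rangle$, and for a Dirac mass $h(A(c))\delta_{\bf z}({\bf x})=\sum_l h(\theta_l)y_l({\bf x})y_l({\bf z})$. The pulse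 $f(t)$ is real, even, supported in a short interval, with Fourier transform $\hat f(\omega)=\int f(t)e^{i\omega t}dt\ge 0$ that is band-limited (so all the spectral sums involving $\hat f$ are finite). Sensors are at points ${\bf x}_1,\ldots,{\bf x}_m\in\Omega$. Sensor functions: $\delta^f_{{\bf x}_s}=\hat f^{1/2}(\sqrt{A(c)})\delta_{{\bf x}_s}$, grouped in the row vector $\boldsymbol\delta^f({\bf x})=(\delta^f_{{\bf x}_1}({\bf x}),\ldots,\delta^f_{{\bf x}_m}({\bf x}))$. Snapshots: ${\bf u}_j({\bf x})=\cos(j\tau\sqrt{A(c)})\boldsymbol\delta^f({\bf x})$ ($m$-dimensional row vectors), ${\bf U}({\bf x})=({\bf u}_0({\bf x}),\ldots,{\bf u}_{n-1}({\bf x}))$. Data matrices: ${\bf D}_j=\int_\Omega\boldsymbol\delta^f({\bf x})^T{\bf u}_j({\bf x})\,d{\bf x}\in\mathbb{R}^{m\times m}$, $j=0,\ldots,2n-1$ (their $(r,s)$ entries are the even-in-time extension of the wave emitted at ${\bf x}_s$ and recorded at ${\bf x}_r$ at time $j\tau$). The mass matrix ${\bf M}\in\mathbb{R}^{nm\times nm}$ has $m\times m$ blocks ${\bf M}_{j,l}=\tfrac12({\bf D}_{j+l}+{\bf D}_{|j-l|})$, $j,l=0,\ldots,n-1$ (equivalently ${\bf M}=\int_\Omega{\bf U}^T{\bf U}\,d{\bf x}$). With ${\bf M}={\bf R}^T{\bf R}$, the orthonormal snapshots are ${\bf V}({\bf x})={\bf U}({\bf x}){\bf R}^{-1}=({\bf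 v}_0({\bf x}),\ldots,{\bf v}_{n-1}({\bf x}))$. A known reference wave speed $c_o({\bf x})$ gives, by the same construction with $c$ replaced by $c_o$, snapshots ${\bf U}_o$, Cholesky factor ${\bf R}_o$ of its mass matrix, and orthonormal snapshots ${\bf V}_o({\bf x})={\bf U}_o({\bf x}){\bf R}_o^{-1}$. The ROM point spread function is $\delta^{\rm ROM}_{\bf y}({\bf x})={\bf V}({\bf x}){\bf V}_o({\bf y})^T=\sum_{j=0}^{n-1}{\bf v}_j({\bf x}){\bf v}_{o,j}({\bf y})^T$, and the estimated internal wave is $g(t,{\bf x};{\bf y})=\cos(t\sqrt{A(c)})\,\hat f^{1/2}(\sqrt{A(c)})\,\delta^{\rm ROM}_{\bf y}({\bf x})$. *)

From HB Require Import structures.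
From mathcomp Require Import all_boot all_order all_algebra.
From mathcomp Require Import all_classical all_reals all_analysis.
Set Implicit Arguments. Unset Strict Implicit. Unset Printing Implicit Defensive.
Import Order.TTheory GRing.Theory Num.Theory.
Local Open Scope ring_scope.

(* Spatial domain Omega: a measurable set in a measure space (T, mu)
   (for the paper: T = R^d, mu = Lebesgue measure).
   The operator A(c) is represented by its spectral data:
   eigenvalues theta_l and L^2(Omega)-orthonormal eigenfunctions phi_l.
   Nb is an index beyond which fhat(sqrt theta_l) = 0 (band-limitation),
   so every spectral sum involving fhat is the finite sum over l < Nb. *)

Section Spectral.
Variables (R : realType) (disp : measure_display) (T : measurableType disp).
Variable (mu : {measure set T -> \bar R}) (Om : set T).

Definition l2ip (f g : T -> R) : R := Rintegral mu Om (fun x => f x * g x).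

Variables (Nb : nat) (theta : nat -> R) (phi : nat -> T -> R).

(* h(A) delta_z (x) = sum_l h(theta_l) y_l(x) y_l(z) *)
Definition spec_dirac (h : R -> R) (z : T) : T -> R :=
  fun x => \sum_(l < Nb) h (theta l) * phi l x * phi l z.

Definition spec_apply (h : R -> R) (f : T -> R) : T -> R :=
  fun x => \sum_(l < Nb) h (theta l) * phi l x * l2ip (phi l) f.

Variable fhat : R -> R.
Definition sqfhat (w : R) : R := Num.sqrt (fhat (Num.sqrt w)).
Definition cosf (t : R) (w : R) : R := cos (t * Num.sqrt w).

Variables (m : nat) (xs : 'I_m -> T) (tau : R).

Definition sensor_fun (s : 'I_m) : T -> R := spec_dirac sqfhat (xs s).
Definition deltaf (x : T) : 'rV[R]_m := \row_s sensor_fun s x.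
Definition snap (j : nat) (x : T) : 'rV[R]_m :=
  \row_s spec_apply (cosf (j%:R * tau)) (sensor_fun s) x.
Definition data (j : nat) : 'M[R]_m :=
  \matrix_(r, s) Rintegral mu Om (fun x => deltaf x 0 r * snap j x 0 s).

Variable n : nat.
Definition Umat (x : T) : 'rV[R]_(\sum_(j < n) m) := \mxrow_(j < n) snap j x.
(* mass matrix, blocks M_{j,l} = (D_{j+l} + D_{|j-l|}) / 2 ;
   (j - l + (l - j))%N is |j - l| with truncated subtraction *)
Definition mass : 'M[R]_(\sum_(j < n) m) :=
  \mxblock_(j < n, l < n)
     ((2%:R)^-1 *: (data (j + l)%N + data (j - l + (l - j))%N)).
End Spectral.

Section Matrices.
Variables (R : realType) (m n : nat).
Local Notation N := (\sum_(j < n) m).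

Definition sym_posdef (M : 'M[R]_N) : Prop :=
  M^T = M /\ forall v : 'rV[R]_N, v != 0 -> 0 < (v *m M *m v^T) 0 0.

Definition block_upper (Rm : 'M[R]_N) : Prop :=
  forall j l : 'I_n, (l < j)%N ->
    submxblock (p_ := fun _ : 'I_n => m) (q_ := fun _ : 'I_n => m) Rm j l = 0.

Definition eblock (j : 'I_n) : 'M[R]_(N, m) :=
  submxrow (q_ := fun _ : 'I_n => m) (1%:M : 'M[R]_N) j.
End Matrices.

Section ROM.
Variables (R : realType) (disp : measure_display) (T : measurableType disp).
Variable (mu : {measure set T -> \bar R}) (Om : set T).
Variables (Nb : nat) (theta : nat -> R) (phi : nat -> T -> R).
Variables (Nbo : nat) (thetao : nat -> R) (phio : nat -> T -> R).
Variables (fhat : R -> R) (m : nat) (xs : 'I_m -> T) (tau : R) (n : nat).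
Variables (Rm Rmo : 'M[R]_(\sum_(j < n) m)).

Definition Vmat (x : T) : 'rV[R]_(\sum_(j < n) m) :=
  Umat mu Om Nb theta phi fhat xs tau n x *m invmx Rm.
Definition Vomat (y : T) : 'rV[R]_(\sum_(j < n) m) :=
  Umat mu Om Nbo thetao phio fhat xs tau n y *m invmx Rmo.
Definition psf_rom (y x : T) : R := (Vmat x *m (Vomat y)^T) 0 0.
Definition gwave (t : R) (x y : T) : R :=
  spec_apply mu Om Nb theta phi (fun w => cosf t w * sqfhat fhat w) (psf_rom y) x.
End ROM.

Definition eigen_data (R : realType) (disp : measure_display) (T : measurableType disp)
  (mu : {measure set T -> \bar R}) (Om : set T)
  (theta : nat -> R) (phi : nat -> T -> R) : Prop :=
  [/\ forall l, 0 < theta l,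
      {homo theta : a b / (a <= b)%N >-> a <= b},
      (theta @ \oo --> +oo)%classic,
      forall l, measurable_fun Om (phi l)
    & forall l k, mu.-integrable Om (fun x => (phi l x * phi k x)%:E) /\
        l2ip mu Om (phi l) (phi k) = (l == k)%:R].

From HB Require Import structures.
From mathcomp Require Import all_boot all_order all_algebra.
From mathcomp Require Import all_classical all_reals all_analysis.
From mathcomp Require Import ring zify.
Set Implicit Arguments. Unset Strict Implicit. Unset Printing Implicit Defensive.
Import Order.TTheory GRing.Theory Num.Theory.
Local Open Scope ring_scope.

(* Band-limitation puts everything in the span of the first Nb eigenfunctions,
   where the spectral calculus is diagonal: with [eigrow x] the row of values
   of the eigenfunctions at x, the snapshots are U(x) = eigrow x * B for a
   fixed coefficient matrix B, and orthonormality together with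
   cos a cos b = (cos (a + b) + cos (a - b)) / 2 gives M = B^T B.  The ROM point
   spread function is eigrow x * z with z = B R^-1 V_o(y)^T, and evaluating the
   propagated wave at the sensors at time j tau multiplies z^T by the j-th
   column block of B; hence the row equals V_o(y) R^-T B^T B e_j
   = V_o(y) R^-T R^T R e_j = V_o(y) R e_j. *)

Section OrthonormalExpansion.
Variables (R : realType) (disp : measure_display) (T : measurableType disp).
Variables (mu : {measure set T -> \bar R}) (Om : set T).
Hypothesis mOm : measurable Om.

Lemma Rintegral_sum (I : Type) (s : seq I) (h : I -> T -> R) :
  (forall i, mu.-integrable Om (EFin \o h i)) ->
  Rintegral mu Om (fun x => \sum_(i <- s) h i x)
  = \sum_(i <- s) Rintegral mu Om (h i).
Proof.
move=> hint; rewrite /Rintegral.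
under eq_integral do rewrite -sumEFin.
rewrite integral_sum // -EFin_sum_fine // => i _.
exact: integrable_fin_num (hint i).
Qed.

Variables (Nb : nat) (phi : nat -> T -> R).
Hypothesis phi_orthonormal : forall l k,
  mu.-integrable Om (fun x => (phi l x * phi k x)%:E) /\
  l2ip mu Om (phi l) (phi k) = (l == k)%:R.

Definition eigrow (x : T) : 'rV[R]_Nb := \row_l phi l x.

Lemma l2ip_expansion p q (A : 'M[R]_(Nb, p)) (B : 'M[R]_(Nb, q)) i j :
  l2ip mu Om (fun x => (eigrow x *m A) 0 i) (fun x => (eigrow x *m B) 0 j)
  = (A^T *m B) i j.
Proof.
have term_int (c : R) (l k : 'I_Nb) :
    mu.-integrable Om (EFin \o (fun x => c * (phi l x * phi k x))).
  apply: (eq_integrable mOm _ _ _ (integrableZl mOm c (phi_orthonormal l k).1)).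
  by move=> x _ /=; rewrite EFinM.
rewrite /l2ip (_ : Rintegral _ _ _ = Rintegral mu Om (fun x =>
    \sum_(lk : 'I_Nb * 'I_Nb)
       (A lk.1 i * B lk.2 j) * (phi lk.1 x * phi lk.2 x))); last first.
  apply: eq_Rintegral => x _; rewrite !mxE mulr_suml.
  under eq_bigr do rewrite mulr_sumr; rewrite pair_bigA.
  by apply: eq_bigr => -[l k] _ /=; rewrite !mxE; ring.
rewrite Rintegral_sum => [|lk]; last exact: term_int.
under eq_bigr => lk _.
  rewrite RintegralZl ?(phi_orthonormal lk.1 lk.2).1 //.
  rewrite -/(l2ip mu Om (phi lk.1) (phi lk.2)) (phi_orthonormal lk.1 lk.2).2.
  over.
rewrite -(pair_bigA _ (fun l k => A l i * B k j * (l == k)%:R)) mxE.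
apply: eq_bigr => l _; rewrite (bigD1 l) //= big1 => [|k kl].
  by rewrite eqxx mulr1 addr0 mxE.
by rewrite eq_sym (negbTE kl) mulr0.
Qed.

Lemma l2ip_eigfun_expansion p (A : 'M[R]_(Nb, p)) (l : 'I_Nb) j :
  l2ip mu Om (phi l) (fun x => (eigrow x *m A) 0 j) = A l j.
Proof.
have phiE : phi l = fun x => (eigrow x *m delta_mx l (0 : 'I_1)) 0 0.
  by apply/funext => x; rewrite -colE !mxE.
by rewrite phiE l2ip_expansion trmx_delta -rowE mxE.
Qed.

Variable theta : nat -> R.

Definition spec_scale (h : R -> R) {p} (A : 'M[R]_(Nb, p)) : 'M[R]_(Nb, p) :=
  \matrix_(l, i) (h (theta l) * A l i).

Lemma spec_apply_expansion (h : R -> R) p (A : 'M[R]_(Nb, p)) j x :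
  spec_apply mu Om Nb theta phi h (fun x => (eigrow x *m A) 0 j) x
  = (eigrow x *m spec_scale h A) 0 j.
Proof.
rewrite /spec_apply mxE; apply: eq_bigr => l _.
by rewrite l2ip_eigfun_expansion !mxE mulrCA mulrA.
Qed.

End OrthonormalExpansion.

Lemma cosD_add_cosB (R : realType) (a b : R) :
  cos (a + b) + cos (a - b) = 2%:R * cos a * cos b.
Proof. by rewrite cosD cosB; ring. Qed.

(* [(j - k + (k - j))%N] is |j - k|, and cos is even. *)
Lemma cosf_addn_distn (R : realType) (tau w : R) (j k : nat) :
  cosf ((j + k)%N%:R * tau) w + cosf ((j - k + (k - j))%N%:R * tau) w
  = 2%:R * cosf (j%:R * tau) w * cosf (k%:R * tau) w.
Proof.
rewrite /cosf -cosD_add_cosB natrD !mulrDl; congr (_ + _).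
have [jk|kj] := leqP j k.
  rewrite (_ : (j - k + (k - j))%N = (k - j)%N); last by lia.
  by rewrite natrB // -cosN !mulrBl; congr cos; ring.
rewrite (_ : (j - k + (k - j))%N = (j - k)%N); last by lia.
by rewrite natrB ?(ltnW kj) // !mulrBl; congr cos; ring.
Qed.

Lemma posdef_factor_unitmx (R : realFieldType) (N : nat) (M F : 'M[R]_N) :
  (forall v : 'rV[R]_N, v != 0 -> 0 < (v *m M *m v^T) 0 0) ->
  M = F^T *m F -> F \in unitmx.
Proof.
move=> M_pos MF; subst M; apply: contraT => F_singular.
have : kermx F^T != 0 by rewrite kermx_eq0 row_free_unit unitmx_tr.
case/rowV0Pn => v /sub_kermxP vF0 v0.
by have := M_pos v v0; rewrite !mulmxA vF0 !mul0mx mxE ltxx.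
Qed.

Lemma trmx_invmx_gram (R : comUnitRingType) p N
    (B : 'M[R]_(p, N)) (F : 'M[R]_N) (w : 'rV[R]_N) :
  F \in unitmx -> B^T *m B = F^T *m F ->
  (B *m invmx F *m w^T)^T *m B = w *m F.
Proof.
move=> F_unit gram.
rewrite !trmx_mul trmxK -!mulmxA gram (mulmxA (invmx F)^T) -trmx_mul.
by rewrite mulmxV // trmx1 mul1mx.
Qed.

Section SnapshotCoordinates.
Variables (R : realType) (disp : measure_display) (T : measurableType disp).
Variables (mu : {measure set T -> \bar R}) (Om : set T).
Hypothesis mOm : measurable Om.
Variables (Nb : nat) (theta : nat -> R) (phi : nat -> T -> R).
Hypothesis phi_orthonormal : forall l k,
  mu.-integrable Om (fun x => (phi l x * phi k x)%:E) /\
  l2ip mu Om (phi l) (phi k) = (l == k)%:R.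
Variables (fhat : R -> R) (m : nat) (xs : 'I_m -> T) (tau : R) (n : nat).

Local Notation eigrow := (eigrow Nb phi).
Local Notation spec_scale := (spec_scale (Nb := Nb) theta).

Definition sensor_coefs : 'M[R]_(Nb, m) :=
  spec_scale (sqfhat fhat) (\matrix_(l, s) phi l (xs s)).

Definition snap_coefs (k : nat) : 'M[R]_(Nb, m) :=
  spec_scale (cosf (k%:R * tau)) sensor_coefs.

Definition snapshot_coefs : 'M[R]_(Nb, \sum_(j < n) m) :=
  \mxrow_(k < n) snap_coefs k.

Lemma sensor_funE s x :
  sensor_fun Nb theta phi fhat xs s x = (eigrow x *m sensor_coefs) 0 s.
Proof. by rewrite mxE; apply: eq_bigr => l _; rewrite !mxE; ring. Qed.

Lemma snapE k x :
  snap mu Om Nb theta phi fhat xs tau k x = eigrow x *m snap_coefs k.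
Proof.
apply/rowP => s; rewrite mxE.
have -> : sensor_fun Nb theta phi fhat xs s = fun x => (eigrow x *m sensor_coefs) 0 s.
  by apply/funext => y; rewrite sensor_funE.
exact: spec_apply_expansion.
Qed.

Lemma UmatE x :
  Umat mu Om Nb theta phi fhat xs tau n x = eigrow x *m snapshot_coefs.
Proof. by rewrite mul_mxrow; apply: eq_mxrow => k; rewrite snapE. Qed.

Lemma dataE k :
  data mu Om Nb theta phi fhat xs tau k = sensor_coefs^T *m snap_coefs k.
Proof.
apply/matrixP => r s; rewrite mxE -(l2ip_expansion mOm phi_orthonormal).
by apply: eq_Rintegral => x _; rewrite snapE mxE sensor_funE.
Qed.

Lemma massE :
  mass mu Om Nb theta phi fhat xs tau n = snapshot_coefs^T *m snapshot_coefs.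
Proof.
rewrite /mass tr_mxrow mul_mxcol_mxrow; apply: eq_mxblock => j k.
rewrite !dataE -mulmxDr scalemxAr; apply/matrixP => r s; rewrite !mxE.
apply: eq_bigr => l _; rewrite !mxE.
set c := cosf ((j + k)%N%:R * tau) (theta l).
(* write the |j - k| term as -c + (c + it) = -c + 2 cos cos *)
rewrite -[cosf ((j - k + (k - j))%N%:R * tau) _](addKr c) cosf_addn_distn.
by field.
Qed.

Lemma snap_coefs_eblock (j : 'I_n) :
  snap_coefs j = snapshot_coefs *m eblock R m j.
Proof. by rewrite mul_submxrow mulmx1 mxrowK. Qed.

Variables (Nbo : nat) (thetao : nat -> R) (phio : nat -> T -> R).
Variables (Rm Rmo : 'M[R]_(\sum_(j < n) m)).

Lemma gwave_sensorE (j : nat) s y :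
  gwave mu Om Nb theta phi Nbo thetao phio fhat xs tau Rm Rmo (j%:R * tau) (xs s) y
  = ((snapshot_coefs *m invmx Rm *m (Vomat mu Om Nbo thetao phio fhat xs tau Rmo y)^T)^T
       *m snap_coefs j) 0 s.
Proof.
set z := snapshot_coefs *m _ *m _.
have psfE : psf_rom mu Om Nb theta phi Nbo thetao phio fhat xs tau Rm Rmo y
    = fun x => (eigrow x *m z) 0 0.
  by apply/funext => x; rewrite /psf_rom /Vmat UmatE !mulmxA.
rewrite /gwave psfE spec_apply_expansion // !mxE.
by apply: eq_bigr => l _; rewrite !mxE; ring.
Qed.

End SnapshotCoordinates.

Theorem proposition1 (R : realType) (disp : measure_display) (T : measurableType disp)
  (mu : {measure set T -> \bar R}) (Om : set T)
  (Nb : nat) (theta : nat -> R) (phi : nat -> T -> R)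
  (Nbo : nat) (thetao : nat -> R) (phio : nat -> T -> R)
  (fhat : R -> R) (m : nat) (xs : 'I_m -> T) (tau : R) (n : nat) (y : T)
  (Rm Rmo : 'M[R]_(\sum_(j < n) m)) :
  measurable Om ->
  eigen_data mu Om theta phi ->
  eigen_data mu Om thetao phio ->
  (forall w, 0 <= fhat w) ->
  (forall l, (Nb <= l)%N -> fhat (Num.sqrt (theta l)) = 0) ->
  (forall l, (Nbo <= l)%N -> fhat (Num.sqrt (thetao l)) = 0) ->
  (forall s, Om (xs s)) ->
  (1 <= n)%N -> 0 < tau -> Om y ->
  sym_posdef (mass mu Om Nb theta phi fhat xs tau n) ->
  mass mu Om Nb theta phi fhat xs tau n = Rm^T *m Rm ->
  block_upper Rm ->
  sym_posdef (mass mu Om Nbo thetao phio fhat xs tau n) ->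
  mass mu Om Nbo thetao phio fhat xs tau n = Rmo^T *m Rmo ->
  block_upper Rmo ->
  forall j : 'I_n,
    \row_(s < m) gwave mu Om Nb theta phi Nbo thetao phio fhat xs tau Rm Rmo
                   (j%:R * tau) (xs s) y
    = Vomat mu Om Nbo thetao phio fhat xs tau Rmo y *m Rm *m eblock R m j.
Proof.
move=> mOm [_ _ _ _ orth] _ _ _ _ _ _ _ _ [_ mass_pos] mass_chol _ _ _ _ j.
have Rm_unit := posdef_factor_unitmx mass_pos mass_chol.
have gram := mass_chol; rewrite (massE mOm Nb theta orth) in gram.
apply/rowP => s; rewrite mxE (gwave_sensorE mOm Nb theta orth).
by rewrite snap_coefs_eblock mulmxA trmx_invmx_gram.
Qed.
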